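(* Let $F$ be a positive integer and let $p$ be the least positive integer such that $p\nmid F$. Then $$\min\{\mathrm{g}(S)\mid S\in\mathrm{Sat}(F)\}=F-\left\lfloor \frac{F}{p}\right\rfloor.$$
   Context: A numerical semigroup is a subset $S\subseteq\mathbb{N}$ closed under addition, containing $0$, with $\mathbb{N}\setminus S$ finite. Its genus $\mathrm{g}(S)$ is the cardinality of $\mathbb{N}\setminus S$, and its Frobenius number $\mathrm{F}(S)$ is the largest integer not in $S$. For $A\subseteq\mathbb{N}$ and $a\in A$, let $\mathrm{d}_A(a)=\gcd\{x\in A\mid x\le a\}$. A numerical semigroup $S$ is saturated if $s+\mathrm{d}_S(s)\in S$ for all $s\in S\setminus\{0\}$. For a positive integer $F$, $\mathrm{Sat}(F)$ denotes the set of all saturated numerical semigroups $S$ with $\mathrm{F}(S)=F$. *)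

From mathcomp Require Import all_boot.
Set Implicit Arguments. Unset Strict Implicit. Unset Printing Implicit Defensive.

Definition numerical_semigroup (S : pred nat) : Prop :=
  [/\ S 0,
      (forall x y, S x -> S y -> S (x + y)) &
      exists N, forall n, N <= n -> S n].

Definition frobenius_is (S : pred nat) (F : nat) : Prop :=
  ~~ S F /\ forall n, F < n -> S n.

Definition genus_is (S : pred nat) (g : nat) : Prop :=
  exists N, (forall n, N <= n -> S n) /\ count (predC S) (iota 0 N) = g.

Definition dA (A : pred nat) (a : nat) : nat :=
  \big[gcdn/0]_(x < a.+1 | A x) x.

Definition saturated (S : pred nat) : Prop :=
  numerical_semigroup S /\ forall s, S s -> 0 < s -> S (s + dA S s).

Definition in_Sat (F : nat) (S : pred nat) : Prop :=
  saturated S /\ frobenius_is S F.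

From mathcomp Require Import all_boot zify.
Set Implicit Arguments. Unset Strict Implicit.

(* If S is saturated, F is not in S and 0 < y < F lies in S, then
   d_S(y) does not divide F: otherwise, climbing along y, y + d_S(y), ... (all
   in S by saturation, with d_S weakly decreasing for divisibility) we would
   reach F itself.  Hence d_S(y) >= p, and since d_S(y) divides every element
   of S below y, the p - 1 integers just below y are gaps.  So every element of
   S in [1, F) is preceded by at least p - 1 gaps, which bounds the number of
   elements of S in [1, F) by F %/ p and the genus from below by F - F %/ p.

   Upper bound.  The semigroup pZ u (F, oo) is saturated, has Frobenius number
   F (as p does not divide F) and exactly F - F %/ p gaps. *)

Lemma dA_dvd (S : pred nat) y z : S z -> z <= y -> dA S y %| z.
Proof.
move=> Sz zy; rewrite /dA.
have zl : z < y.+1 by [].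
exact: (@biggcdn_inf _ (Ordinal zl) (fun i : 'I_y.+1 => S i) (fun i => nat_of_ord i)).
Qed.

Lemma dvd_dA (S : pred nat) y m :
  (forall z, S z -> z <= y -> m %| z) -> m %| dA S y.
Proof. by move=> mS; apply/dvdn_biggcdP => i Si; apply: mS; rewrite // -ltnS. Qed.

Lemma dA_gt0 (S : pred nat) y : S y -> 0 < y -> 0 < dA S y.
Proof.
move=> Sy y0; have := dA_dvd Sy (leqnn y).
by case: (dA S y) => // /[!dvd0n] /eqP y_eq0; rewrite y_eq0 in y0.
Qed.

Lemma dA_dvd_mono (S : pred nat) y z : y <= z -> dA S z %| dA S y.
Proof. by move=> yz; apply: dvd_dA => x Sx xy; apply: dA_dvd; lia. Qed.

Lemma dA_le_gap (S : pred nat) y z : S y -> S z -> z < y -> dA S y <= y - z.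
Proof.
move=> Sy Sz zy; apply: dvdn_leq; first lia.
by rewrite dvdn_sub ?(dA_dvd Sy) ?(dA_dvd Sz) // ltnW.
Qed.

Lemma dA_ndvd_gap (S : pred nat) F : saturated S -> ~~ S F ->
  forall y, S y -> 0 < y -> y < F -> ~~ (dA S y %| F).
Proof.
move=> [_ sat] nSF y; move: {2}(F - y) (leqnn (F - y)) => m.
elim: m y => [|m IH] y hm Sy y0 yF; first lia.
apply/negP => dF; set d := dA S y in dF.
have d0 : 0 < d by exact: dA_gt0.
have dFy : d <= F - y.
  by apply: dvdn_leq; [lia | rewrite dvdn_sub // dA_dvd].
have Syd : S (y + d) by exact: sat.
have ydF : y + d != F by apply: contraNneq nSF => <-.
have := IH (y + d) ltac:(lia) Syd ltac:(lia) ltac:(lia).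
by rewrite (dvdn_trans (dA_dvd_mono S (leq_addr d y)) dF).
Qed.

Lemma dA_ge_least_nondivisor (S : pred nat) F p : saturated S -> ~~ S F ->
  (forall q, 0 < q -> q < p -> q %| F) ->
  forall y, S y -> 0 < y -> y < F -> p <= dA S y.
Proof.
move=> sat nSF hq y Sy y0 yF; rewrite leqNgt.
apply: contra (dA_ndvd_gap sat nSF Sy y0 yF) => lt.
exact: hq (dA_gt0 Sy y0) lt.
Qed.

(* If distinct elements of S in [0, m] (with 0 in S) are at distance >= p,
   then S has at most m %/ p elements in [1, m] (stated without division). *)
Lemma count_sparse (S : pred nat) p m : 0 < p -> S 0 ->
  (forall y z, S y -> S z -> z < y -> y <= m -> p <= y - z) ->
  count S (iota 1 m) * p <= m.
Proof.
move=> p0 S0; elim: m {-2}m (leqnn m) => [|M IH] n hn sparse.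
  by have -> : n = 0 by lia.
case: n hn sparse => [//|n] hn sparse.
have sparse_le k : k <= n -> forall y z, S y -> S z -> z < y -> y <= k ->
    p <= y - z.
  by move=> kn y z Sy Sz zy yk; apply: sparse => //; lia.
case Sn: (S n.+1); last first.
  have := IH n ltac:(lia) (sparse_le n (leqnn n)).
  by rewrite -[n.+1]addn1 iotaD count_cat /= Sn addn0; lia.
have pn : p <= n.+1 by have := sparse n.+1 0 Sn S0 (ltn0Sn n) (leqnn _); lia.
have gap : count S (iota (n.+2 - p) p.-1) = 0.
  apply/eqP; rewrite -leqn0 leqNgt -has_count; apply/hasP => -[z].
  rewrite mem_iota => /andP [z1 z2] Sz.
  have := sparse n.+1 z Sn Sz ltac:(lia) (leqnn _); lia.
have split_iota :
    iota 1 n.+1 = iota 1 (n.+1 - p) ++ iota (n.+2 - p) p.-1 ++ [:: n.+1].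
  rewrite catA (_ : n.+2 - p = 1 + (n.+1 - p)); last lia.
  rewrite -iotaD {1}(_ : n.+1 = (n.+1 - p + p.-1) + 1); last lia.
  by rewrite iotaD /=; congr (_ ++ [:: _]); lia.
have := IH (n.+1 - p) ltac:(lia) (sparse_le (n.+1 - p) ltac:(lia)).
by rewrite split_iota !count_cat gap /= Sn; lia.
Qed.

Lemma genus_upto_frobenius (S : pred nat) F g :
  frobenius_is S F -> genus_is S g -> g = count (predC S) (iota 0 F.+1).
Proof.
move=> [nSF aboveF] [N [hN <-]].
have FN : F < N by rewrite ltnNge; apply: contra nSF => /hN.
have tail_in_S : count (predC S) (iota F.+1 (N - F.+1)) = 0.
  apply/eqP; rewrite -leqn0 leqNgt -has_count; apply/hasP => -[z].
  by rewrite mem_iota => /andP [Fz _] /=; rewrite aboveF.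
by rewrite (_ : N = F.+1 + (N - F.+1)) ?iotaD ?count_cat ?tail_in_S ?addn0 //; lia.
Qed.

Lemma genus_lower_bound (S : pred nat) F p g : 0 < F -> 0 < p ->
  (forall q, 0 < q -> q < p -> q %| F) ->
  in_Sat F S -> genus_is S g -> F - F %/ p <= g.
Proof.
move=> F0 p0 hq [sat frobF] genus.
have [[S0 _ _] _] := sat; have [nSF _] := frobF.
have sparse y z : S y -> S z -> z < y -> y <= F.-1 -> p <= y - z.
  move=> Sy Sz zy yF; apply: leq_trans (dA_le_gap Sy Sz zy).
  by apply: (dA_ge_least_nondivisor sat nSF hq Sy); lia.
have elems_le : count S (iota 1 F.-1) <= F %/ p.
  by rewrite leq_divRL //; apply: leq_trans (count_sparse p0 S0 sparse) _; lia.
have split_iota : iota 0 F.+1 = 0 :: iota 1 F.-1 ++ [:: F].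
  rewrite (_ : F.+1 = 1 + (F.-1 + 1)); last lia.
  by rewrite !iotaD /= add0n add1n prednK.
have := count_predC S (iota 0 F.+1).
rewrite (genus_upto_frobenius frobF genus) split_iota /= !count_cat /= S0 (negbTE nSF).
rewrite size_cat /= size_iota; lia.
Qed.

Definition multiples_or_above (p F : nat) : pred nat :=
  fun n => (p %| n) || (F < n).

Lemma multiples_or_above_semigroup p F :
  numerical_semigroup (multiples_or_above p F).
Proof.
split=> [|x y|]; rewrite /multiples_or_above.
- by rewrite dvdn0.
- move=> /orP [px|Fx] /orP [py|Fy]; apply/orP;
    [by left; rewrite dvdn_add | by right; lia ..].
- by exists F.+1 => n Fn; apply/orP; right.
Qed.

(* It is saturated: below F its elements are multiples of p, and so is d_S. *)
Lemma multiples_or_above_in_Sat p F : ~~ (p %| F) -> in_Sat F (multiples_or_above p F).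
Proof.
move=> npF; split; last first.
  by split=> [|n Fn]; rewrite /multiples_or_above ?(negbTE npF) ?ltnn // Fn orbT.
split; first exact: multiples_or_above_semigroup.
move=> s Ss s0; apply/orP; case: (ltnP F s) => Fs; first by right; lia.
left; have ps : p %| s by move: Ss; rewrite /multiples_or_above ltnNge Fs orbF.
rewrite dvdn_add // dvd_dA // => z /orP [//|Fz] zs; lia.
Qed.

Lemma count_multiples p n : 0 < p -> count (dvdn p) (iota 0 n.+1) = (n %/ p).+1.
Proof.
move=> p0; elim: n => [|n IH]; first by rewrite /= dvdn0 div0n.
rewrite -[n.+2]addn1 iotaD count_cat IH /= add0n (divnS _ p0) addn0; lia.
Qed.

(* Its gaps are the non-multiples of p in [0, F]. *)
Lemma multiples_or_above_genus p F : 0 < p ->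
  genus_is (multiples_or_above p F) (F - F %/ p).
Proof.
move=> p0; exists F.+1; split=> [n Fn|]; first by apply/orP; right.
rewrite (eq_in_count (a2 := predC (dvdn p))); last first.
  move=> z /[!mem_iota] /andP [_ zF].
  by rewrite /= /multiples_or_above ltnNge -ltnS zF orbF.
have := count_predC (dvdn p) (iota 0 F.+1).
rewrite count_multiples // size_iota addSn => /succn_inj total.
by rewrite -[X in X - _]total addKn.
Qed.

Theorem corollary32 (F p : nat) :
  0 < F ->
  0 < p -> ~~ (p %| F) -> (forall q, 0 < q -> q < p -> q %| F) ->
  (exists S : pred nat, in_Sat F S /\ genus_is S (F - F %/ p)) /\
  (forall (S : pred nat) (g : nat), in_Sat F S -> genus_is S g -> F - F %/ p <= g).
Proof.
move=> F0 p0 npF hq; split.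
- exists (multiples_or_above p F).
  by split; [exact: multiples_or_above_in_Sat | exact: multiples_or_above_genus].
- by move=> S g; exact: genus_lower_bound.
Qed.
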